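(* Let $W:\mathcal X\to\mathcal Y$ be a DMC with $|\mathcal Y|>2|\mathcal X|$, let $L\ge 2|\mathcal X|$ be an integer, and fix any input distribution. Then $$\Delta I^\ast_{\mathrm{deg}}=\min_{Q\preccurlyeq W,\ |Q|\le L}\big(I(W)-I(Q)\big)\le \nu(|\mathcal X|)\, L^{-\frac{2}{|\mathcal X|-1}},$$ so in particular $\Delta I^\ast_{\mathrm{deg}}=O\big(L^{-2/(|\mathcal X|-1)}\big)$. Moreover, the channel $Q$ produced by the greedy-merge algorithm satisfies $I(W)-I(Q)\le \nu(|\mathcal X|)\,L^{-\frac{2}{|\mathcal X|-1}}$.
   Context: $\mathcal X,\mathcal Y$ are finite disjoint sets with $|\mathcal X|\ge 2$; $W:\mathcal X\to\mathcal Y$ is a discrete memoryless channel (DMC) with transition probabilities $W(y|x)$. An input distribution $\pi(x)>0$ on $\mathcal X$ is fixed, and the output probabilities $\pi(y)=\sum_x\pi(x)W(y|x)$ are assumed positive. $I(W)$ is the mutual information between the input and output of $W$ under this input distribution (natural logarithm); for any other channel with input alphabet $\mathcal X$ the same input distribution is used. A channel $Q:\mathcal X\to\mathcal Z$ is degraded with respect to $W$, written $Q\preccurlyeq W$, if there is a channel $\Phi:\mathcal Y\to\mathcal Z$ with $Q(z|x)=\sum_{y}W(y|x)\Phi(z|y)$ for all $x,z$. $|Q|$ denotes the output alphabet size of $Q$. Merging two distinct output letters $\alpha,\beta$ of a channel $W$ produces the channel $Q$ with output alphabet $(\mathcal Y\setminus\{\alpha,\beta\})\cup\{\gamma\}$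 ($\gamma$ a new symbol), $Q(\gamma|x)=W(\alpha|x)+W(\beta|x)$ and $Q(y|x)=W(y|x)$ for all other $y$. Greedy-merge: starting from $W$, repeatedly merge the pair of output letters whose merger gives the smallest decrease in mutual information, until the output alphabet has $L$ letters. The constant is $$\nu(n)=\frac{\pi n(n-1)}{2\left(\sqrt{1+\frac{1}{2(n-1)}}-1\right)^2}\left(\frac{2n}{\Gamma\!\left(1+\frac{n-1}{2}\right)}\right)^{\frac{2}{n-1}},$$ where $\pi$ here is the number $3.14159\ldots$ and $\Gamma$ is the Gamma function. *)

From Stdlib Require Import Reals Lra Lia List Arith.
Import ListNotations.
Open Scope R_scope.

Definition fsum (n : nat) (f : nat -> R) : R :=
  fold_right Rplus 0 (map f (seq 0 n)).

(* A channel with input alphabet X = {0,..,nx-1} is represented by the list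
   of its output columns: an output letter y is a column c with c x = W(y|x).
   The output alphabet size |W| is the length of the list.  Mutual
   information only depends on the (multi)set of columns, so the actual names
   of the output letters are immaterial. *)
Definition column := nat -> R.
Definition channel := list column.
Definition zcol : column := fun _ => 0.

Definition is_input_dist (nx : nat) (pi : nat -> R) : Prop :=
  (forall x, (x < nx)%nat -> 0 < pi x) /\ fsum nx pi = 1.

Definition is_channel (nx : nat) (W : channel) : Prop :=
  (forall c, In c W -> forall x, (x < nx)%nat -> 0 <= c x) /\
  (forall x, (x < nx)%nat -> fold_right Rplus 0 (map (fun c => c x) W) = 1).

Definition out_prob (nx : nat) (pi : nat -> R) (c : column) : R :=
  fsum nx (fun x => pi x * c x).

(* pi(x) W(y|x) ln (W(y|x)/pi(y)), with the convention 0 ln 0 = 0 *)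
Definition mi_term (p w py : R) : R :=
  if Req_EM_T w 0 then 0 else p * w * ln (w / py).

Definition MI (nx : nat) (pi : nat -> R) (W : channel) : R :=
  fold_right Rplus 0
    (map (fun c => fsum nx (fun x => mi_term (pi x) (c x) (out_prob nx pi c))) W).

Definition degraded (nx : nat) (Q W : channel) : Prop :=
  exists Phi : nat -> nat -> R,
    (forall y z, (y < length W)%nat -> (z < length Q)%nat -> 0 <= Phi y z) /\
    (forall y, (y < length W)%nat -> fsum (length Q) (fun z => Phi y z) = 1) /\
    (forall z x, (z < length Q)%nat -> (x < nx)%nat ->
        nth z Q zcol x = fsum (length W) (fun y => nth y W zcol x * Phi y z)).

Definition merge (W : channel) (i j : nat) : channel :=
  (fun x => nth i W zcol x + nth j W zcol x) ::
  map snd (filter (fun p => andb (negb (Nat.eqb (fst p) i)) (negb (Nat.eqb (fst p) j)))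
                  (combine (seq 0 (length W)) W)).

(* one greedy step: merge a pair minimizing the decrease of mutual information
   (ties broken arbitrarily) *)
Definition greedy_step (nx : nat) (pi : nat -> R) (Q Q' : channel) : Prop :=
  exists i j, (i < j)%nat /\ (j < length Q)%nat /\ Q' = merge Q i j /\
    forall i' j', (i' < j')%nat -> (j' < length Q)%nat ->
      MI nx pi Q - MI nx pi (merge Q i j) <= MI nx pi Q - MI nx pi (merge Q i' j').

Inductive greedy_merge (nx : nat) (pi : nat -> R) (L : nat) : channel -> channel -> Prop :=
| gm_done : forall Q, (length Q <= L)%nat -> greedy_merge nx pi L Q Q
| gm_step : forall Q Q' R, (L < length Q)%nat -> greedy_step nx pi Q Q' ->
    greedy_merge nx pi L Q' R -> greedy_merge nx pi L Q R.

(* gamma_half k = Gamma(k/2) for k >= 1 (Gamma(1/2) = sqrt PI, Gamma(1) = 1,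
   Gamma(s+1) = s Gamma(s)).  Value at k = 0 is irrelevant. *)
Fixpoint gamma_half (k : nat) : R :=
  match k with
  | O => 0
  | S O => sqrt PI
  | S (S O) => 1
  | S (S k') => INR k' / 2 * gamma_half k'
  end.

(* nu(n); note Gamma(1 + (n-1)/2) = gamma_half (n+1) *)
Definition nu (n : nat) : R :=
  PI * INR n * (INR n - 1) /
    (2 * (sqrt (1 + 1 / (2 * (INR n - 1))) - 1) ^ 2) *
  Rpower (2 * INR n / gamma_half (n + 1)) (2 / (INR n - 1)).

(* Write [s_y] for the square root of the posterior distribution of the input given the
   output letter [y]: a point of the nonnegative part of the unit sphere of R^n, n = |X|.
   Bounding the logarithms by [ln t <= t - 1], merging two letters [y], [y'] decreases
   the mutual information by at most [(pi(y) + pi(y')) |s_y - s_y'|^2].  A channel with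
   [K] output letters has more than [K/2] letters of probability at most [2/K]; cutting
   the sphere into [n m^(n-1)] cells (position of the largest coordinate, and the
   [m]-adic digits of the others) of squared diameter at most [n (n-1) / m^2], with
   [m] the largest integer such that [2 n m^(n-1) <= K], two of these light letters
   share a cell.  Hence some merge, and a fortiori the greedy one, costs
   [O(K^(-1 - 2/(n-1)))], and summing these costs from [|W|] letters down to [L]
   telescopes to [O(L^(-2/(n-1)))].  The result of greedy-merge is degraded with
   respect to [W] because it is the image of [W] under a map of output letters. *)

From Stdlib Require Import Reals Lra Lia List Arith ZArith Classical.
Import ListNotations.
Open Scope R_scope.

Definition sumR (l : list R) : R := fold_right Rplus 0 l.

Lemma sumR_cons a l : sumR (a :: l) = a + sumR l.
Proof. reflexivity. Qed.

Lemma sumR_app l1 l2 : sumR (l1 ++ l2) = sumR l1 + sumR l2.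
Proof. induction l1 as [|a l1 IH]; cbn [app]; rewrite ?sumR_cons, ?IH; simpl; lra. Qed.

Section SumMap.
Context {A : Type}.

Lemma sumR_map_add (f g : A -> R) l :
  sumR (map (fun a => f a + g a) l) = sumR (map f l) + sumR (map g l).
Proof. induction l as [|a l IH]; cbn [map]; rewrite ?sumR_cons, ?IH; simpl; lra. Qed.

Lemma sumR_map_scal (c : R) (f : A -> R) l :
  sumR (map (fun a => c * f a) l) = c * sumR (map f l).
Proof. induction l as [|a l IH]; cbn [map]; rewrite ?sumR_cons, ?IH; simpl; lra. Qed.

Lemma sumR_map_const (c : R) (l : list A) : sumR (map (fun _ => c) l) = INR (length l) * c.
Proof. induction l as [|a l IH]; cbn [map length]; rewrite ?sumR_cons, ?IH, ?S_INR; simpl; lra. Qed.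

Lemma sumR_map_le (f g : A -> R) l :
  (forall a, In a l -> f a <= g a) -> sumR (map f l) <= sumR (map g l).
Proof.
  induction l as [|a l IH]; intros H; cbn [map]; rewrite ?sumR_cons; [simpl; lra|].
  pose proof (H a (or_introl eq_refl)).
  pose proof (IH (fun b Hb => H b (or_intror Hb))). lra.
Qed.

Lemma sumR_map_lt (f g : A -> R) l :
  l <> nil -> (forall a, In a l -> f a < g a) -> sumR (map f l) < sumR (map g l).
Proof.
  intros Hl H. destruct l as [|a l]; [congruence|]. cbn [map]; rewrite !sumR_cons.
  pose proof (H a (or_introl eq_refl)).
  enough (sumR (map f l) <= sumR (map g l)) by lra.
  apply sumR_map_le. intros b Hb. apply Rlt_le, H. now right.
Qed.

End SumMap.

Lemma fsum_S n f : fsum (S n) f = fsum n f + f n.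
Proof.
  change (sumR (map f (seq 0 (S n))) = sumR (map f (seq 0 n)) + f n).
  rewrite seq_S, map_app, sumR_app. simpl. lra.
Qed.

Lemma fsum_ext n f g : (forall x, (x < n)%nat -> f x = g x) -> fsum n f = fsum n g.
Proof. intros H. unfold fsum. f_equal. apply map_ext_in. intros a Ha%in_seq. apply H; lia. Qed.

Lemma fsum_le n f g : (forall x, (x < n)%nat -> f x <= g x) -> fsum n f <= fsum n g.
Proof. intros H. apply sumR_map_le. intros a Ha%in_seq. apply H; lia. Qed.

Lemma fsum_lt n f g : (0 < n)%nat -> (forall x, (x < n)%nat -> f x < g x) -> fsum n f < fsum n g.
Proof.
  intros Hn H. apply sumR_map_lt.
  - destruct n; [lia|]. discriminate.
  - intros a Ha%in_seq. apply H; lia.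
Qed.

Lemma fsum_add n f g : fsum n (fun x => f x + g x) = fsum n f + fsum n g.
Proof. apply sumR_map_add. Qed.

Lemma fsum_scal n c f : fsum n (fun x => c * f x) = c * fsum n f.
Proof. apply sumR_map_scal. Qed.

Lemma fsum_const n c : fsum n (fun _ => c) = INR n * c.
Proof.
  change (sumR (map (fun _ => c) (seq 0 n)) = INR n * c).
  now rewrite sumR_map_const, length_seq.
Qed.

Lemma fsum_nonneg n f : (forall x, (x < n)%nat -> 0 <= f x) -> 0 <= fsum n f.
Proof.
  intros H. apply Rle_trans with (fsum n (fun _ => 0)).
  - rewrite fsum_const. lra.
  - now apply fsum_le.
Qed.

Lemma fsum_swap n m (F : nat -> nat -> R) :
  fsum n (fun a => fsum m (fun b => F a b)) = fsum m (fun b => fsum n (fun a => F a b)).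
Proof.
  induction n as [|n IH].
  - rewrite (fsum_ext m _ (fun _ => 0)) by reflexivity. rewrite fsum_const.
    change (0 = INR m * 0). ring.
  - rewrite fsum_S, IH, <- fsum_add. apply fsum_ext. intros. now rewrite fsum_S.
Qed.

Lemma map_nth_seq {A} (l : list A) d : map (fun i => nth i l d) (seq 0 (length l)) = l.
Proof.
  apply nth_ext with (d := d) (d' := d); rewrite ?length_map, ?length_seq; auto.
  intros n Hn. rewrite (nth_indep _ d (nth 0 l d)) by now rewrite length_map, length_seq.
  rewrite (map_nth (fun i => nth i l d)). now rewrite seq_nth.
Qed.

Lemma sumR_as_fsum {A} (g : A -> R) (l : list A) d :
  sumR (map g l) = fsum (length l) (fun i => g (nth i l d)).
Proof.
  change (sumR (map g l) = sumR (map (fun i => g (nth i l d)) (seq 0 (length l)))).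
  rewrite <- (map_map (fun i => nth i l d) g). now rewrite map_nth_seq.
Qed.
Definition b2R (b : bool) : R := if b then 1 else 0.

Lemma fsum_indicator n (a : nat -> R) k : (k < n)%nat ->
  fsum n (fun y => a y * b2R (y =? k)%nat) = a k.
Proof.
  induction n as [|n IH]; intros Hk; [lia|]. rewrite fsum_S.
  destruct (Nat.eq_dec k n) as [->|Hne].
  - rewrite (fsum_ext n _ (fun _ => 0)), fsum_const, Nat.eqb_refl; [unfold b2R; ring|].
    intros y Hy. rewrite (proj2 (Nat.eqb_neq y n)) by lia. unfold b2R; ring.
  - rewrite IH, (proj2 (Nat.eqb_neq n k)) by lia. unfold b2R; ring.
Qed.

Lemma fsum_split n (F : nat -> R) j : (j < n)%nat ->
  fsum n F = F j + fsum n (fun x => if (x =? j)%nat then 0 else F x).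
Proof.
  intros Hj. rewrite <- (fsum_indicator n F j Hj), <- fsum_add.
  apply fsum_ext. intros x _. unfold b2R. destruct (x =? j)%nat; ring.
Qed.

Lemma filter_combine_seq {A} (P : nat -> bool) (l : list A) d k0 :
  map snd (filter (fun p => P (fst p)) (combine (seq k0 (length l)) l)) =
  map (fun k => nth (k - k0) l d) (filter P (seq k0 (length l))).
Proof.
  revert k0; induction l as [|a l IH]; intros k0; [reflexivity|]. cbn [length seq combine filter fst].
  assert (Shift : map (fun k => nth (k - S k0) l d) (filter P (seq (S k0) (length l))) =
                  map (fun k => nth (k - k0) (a :: l) d) (filter P (seq (S k0) (length l)))).
  { apply map_ext_in. intros k [Hk%in_seq _]%filter_In.
    now replace (k - k0)%nat with (S (k - S k0)) by lia. }
  destruct (P k0); cbn [map]; rewrite IH, Shift; [|reflexivity].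
  now rewrite Nat.sub_diag.
Qed.

Definition keep_pair (i j k : nat) : bool := negb (k =? i)%nat && negb (k =? j)%nat.

Definition rest_indices (i j n : nat) : list nat :=
  seq 0 i ++ seq (S i) (j - S i) ++ seq (S j) (n - S j).

Definition merged_col (Q : channel) (i j : nat) : column :=
  fun x => nth i Q zcol x + nth j Q zcol x.

Lemma seq_split2 i j n : (i < j < n)%nat ->
  seq 0 n = seq 0 i ++ [i] ++ seq (S i) (j - S i) ++ [j] ++ seq (S j) (n - S j).
Proof.
  intros H. replace n with (i + (1 + ((j - S i) + (1 + (n - S j)))))%nat at 1 by lia.
  rewrite !seq_app. cbn. repeat f_equal; lia.
Qed.

Lemma filter_keep_pair i j n : (i < j < n)%nat ->
  filter (keep_pair i j) (seq 0 n) = rest_indices i j n.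
Proof.
  intros H. rewrite (seq_split2 i j n H). unfold rest_indices. rewrite !filter_app.
  cbn [filter]. unfold keep_pair at 2 4. rewrite !Nat.eqb_refl, Bool.andb_false_r. cbn.
  rewrite !forallb_filter_id; [reflexivity| | |];
    apply forallb_forall; intros x Hx%in_seq; unfold keep_pair;
    rewrite (proj2 (Nat.eqb_neq x i)), (proj2 (Nat.eqb_neq x j)) by lia; reflexivity.
Qed.

Lemma merge_spec Q i j : (i < j < length Q)%nat ->
  merge Q i j = merged_col Q i j :: map (fun k => nth k Q zcol) (rest_indices i j (length Q)).
Proof.
  intros H. unfold merge. f_equal.
  change (fun p : nat * column => (negb (fst p =? i) && negb (fst p =? j))%bool)
    with (fun p : nat * column => keep_pair i j (fst p)).
  rewrite filter_combine_seq with (d := zcol), filter_keep_pair by exact H.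
  apply map_ext. intros k. now rewrite Nat.sub_0_r.
Qed.

Lemma length_merge Q i j : (i < j < length Q)%nat -> length (merge Q i j) = (length Q - 1)%nat.
Proof.
  intros H. rewrite merge_spec by exact H. cbn [length].
  rewrite length_map. unfold rest_indices. rewrite !length_app, !length_seq. lia.
Qed.

Lemma sumR_map_merge (g : column -> R) Q i j : (i < j < length Q)%nat ->
  sumR (map g (merge Q i j)) =
  sumR (map g Q) - g (nth i Q zcol) - g (nth j Q zcol) + g (merged_col Q i j).
Proof.
  intros H. rewrite merge_spec by exact H.
  replace (map g Q) with (map (fun k => g (nth k Q zcol)) (seq 0 (length Q)))
    by (now rewrite <- (map_map (fun k => nth k Q zcol) g), map_nth_seq).
  rewrite (seq_split2 i j (length Q)) by exact H. unfold rest_indices.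
  cbn [map]. rewrite map_map, !map_app, !sumR_cons, !sumR_app. cbn [map].
  rewrite !sumR_cons. change (sumR []) with 0. lra.
Qed.

Lemma In_merge Q i j c : (i < j < length Q)%nat -> In c (merge Q i j) ->
  c = merged_col Q i j \/ In c Q.
Proof.
  intros H Hc. rewrite merge_spec in Hc by exact H.
  destruct Hc as [Hc|[k [<- Hk]]%in_map_iff]; [now left|right].
  apply nth_In. unfold rest_indices in Hk. rewrite !in_app_iff, !in_seq in Hk. lia.
Qed.

(* The letter [k] of [merge Q i j] is the merged letter for [k = 0], and otherwise
   the letter [nth (k - 1) (rest_indices i j n)] of [Q]; [merge_index i j] sends every
   letter of [Q] to its new position. *)
Definition merge_index (i j y : nat) : nat :=
  if ((y =? i) || (y =? j))%bool then 0 else if (y <? i)%nat then S y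
  else if (y <? j)%nat then y else (y - 1)%nat.

Lemma merge_index_lt i j n y : (i < j < n)%nat -> (y < n)%nat -> (merge_index i j y < n - 1)%nat.
Proof.
  intros H Hy. unfold merge_index.
  destruct (Nat.eqb_spec y i), (Nat.eqb_spec y j), (Nat.ltb_spec y i), (Nat.ltb_spec y j); cbn; lia.
Qed.

Lemma merge_index_0 i j y : (i < j)%nat -> merge_index i j y = 0%nat <-> y = i \/ y = j.
Proof.
  intros H. unfold merge_index.
  destruct (Nat.eqb_spec y i), (Nat.eqb_spec y j), (Nat.ltb_spec y i), (Nat.ltb_spec y j); cbn; lia.
Qed.

Lemma merge_index_S i j y r : (i < j)%nat ->
  merge_index i j y = S r <-> y = (if r <? i then r else if r <? j - 1 then S r else S (S r))%nat.
Proof.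
  intros H. unfold merge_index.
  destruct (Nat.eqb_spec y i), (Nat.eqb_spec y j), (Nat.ltb_spec y i), (Nat.ltb_spec y j),
    (Nat.ltb_spec r i), (Nat.ltb_spec r (j - 1)); cbn; lia.
Qed.

Lemma nth_rest_indices i j n r : (i < j < n)%nat -> (r < n - 2)%nat ->
  nth r (rest_indices i j n) 0%nat = (if r <? i then r else if r <? j - 1 then S r else S (S r))%nat.
Proof.
  intros H Hr. unfold rest_indices. destruct (Nat.ltb_spec r i), (Nat.ltb_spec r (j - 1)).
  - rewrite app_nth1 by (rewrite length_seq; lia). rewrite seq_nth by lia. lia.
  - rewrite app_nth1 by (rewrite length_seq; lia). rewrite seq_nth by lia. lia.
  - rewrite app_nth2, app_nth1 by (rewrite ?length_seq; lia).
    rewrite length_seq, seq_nth by lia. lia.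
  - rewrite app_nth2, app_nth2 by (rewrite ?length_seq; lia).
    rewrite !length_seq, seq_nth by lia. lia.
Qed.

Lemma nth_merge Q i j z x : (i < j < length Q)%nat -> (z < length Q - 1)%nat ->
  nth z (merge Q i j) zcol x =
  fsum (length Q) (fun y => nth y Q zcol x * b2R (merge_index i j y =? z)%nat).
Proof.
  intros H Hz. rewrite merge_spec by exact H. destruct z as [|r].
  - cbn [nth]. unfold merged_col.
    rewrite (fsum_ext _ _ (fun y => nth y Q zcol x * b2R (y =? i)%nat + nth y Q zcol x * b2R (y =? j)%nat)).
    + now rewrite fsum_add, !fsum_indicator by lia.
    + intros y _. rewrite <- Rmult_plus_distr_l. f_equal.
      pose proof (merge_index_0 i j y ltac:(lia)) as E0. unfold b2R.
      destruct (Nat.eqb_spec (merge_index i j y) 0), (Nat.eqb_spec y i), (Nat.eqb_spec y j);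
        lra || (exfalso; intuition lia).
  - cbn [nth]. set (k := nth r (rest_indices i j (length Q)) 0%nat).
    assert (Hk : k = (if r <? i then r else if r <? j - 1 then S r else S (S r))%nat)
      by (apply nth_rest_indices; lia).
    rewrite (nth_indep _ _ ((fun k => nth k Q zcol) 0%nat))
      by (rewrite length_map; unfold rest_indices; rewrite !length_app, !length_seq; lia).
    rewrite (map_nth (fun k => nth k Q zcol)). fold k.
    rewrite (fsum_ext _ _ (fun y => nth y Q zcol x * b2R (y =? k)%nat)).
    + rewrite fsum_indicator; [reflexivity|].
      rewrite Hk. destruct (Nat.ltb_spec r i), (Nat.ltb_spec r (j - 1)); lia.
    + intros y _. do 2 f_equal. apply Bool.eq_iff_eq_true.
      rewrite !Nat.eqb_eq, Hk. apply merge_index_S. lia.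
Qed.

Definition proper_channel nx pi (Q : channel) : Prop :=
  is_channel nx Q /\ forall c, In c Q -> 0 < out_prob nx pi c.

Lemma out_prob_merged_col nx pi Q i j :
  out_prob nx pi (merged_col Q i j) = out_prob nx pi (nth i Q zcol) + out_prob nx pi (nth j Q zcol).
Proof. unfold out_prob, merged_col. rewrite <- fsum_add. apply fsum_ext. intros; ring. Qed.

Lemma proper_channel_merge nx pi Q i j : (i < j < length Q)%nat ->
  proper_channel nx pi Q -> proper_channel nx pi (merge Q i j).
Proof.
  intros H [[Hnn Hsum] Hpos].
  assert (Ii : In (nth i Q zcol) Q) by (apply nth_In; lia).
  assert (Ij : In (nth j Q zcol) Q) by (apply nth_In; lia).
  split; [split|].
  - intros c Hc x Hx. destruct (In_merge Q i j c H Hc) as [->|HcQ]; [|now apply Hnn].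
    unfold merged_col. pose proof (Hnn _ Ii x Hx). pose proof (Hnn _ Ij x Hx). lra.
  - intros x Hx. specialize (Hsum x Hx).
    change (sumR (map (fun c : column => c x) Q) = 1) in Hsum.
    change (sumR (map (fun c : column => c x) (merge Q i j)) = 1).
    rewrite sumR_map_merge, Hsum by exact H. unfold merged_col. ring.
  - intros c Hc. destruct (In_merge Q i j c H Hc) as [->|HcQ]; [|now apply Hpos].
    rewrite out_prob_merged_col. pose proof (Hpos _ Ii). pose proof (Hpos _ Ij). lra.
Qed.

Definition output_map nx (f : nat -> nat) (W R : channel) : Prop :=
  (forall y, (y < length W)%nat -> (f y < length R)%nat) /\
  (forall z x, (z < length R)%nat -> (x < nx)%nat ->
     nth z R zcol x = fsum (length W) (fun y => nth y W zcol x * b2R (f y =? z)%nat)).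

Lemma output_map_id nx W : output_map nx (fun y => y) W W.
Proof. split; [easy|]. intros z x Hz _. now rewrite fsum_indicator. Qed.

Lemma output_map_merge nx Q i j R f : (i < j < length Q)%nat ->
  output_map nx f (merge Q i j) R -> output_map nx (fun y => f (merge_index i j y)) Q R.
Proof.
  intros H [Hf HR]. rewrite length_merge in Hf, HR by exact H. split.
  - intros y Hy. apply Hf, (merge_index_lt i j (length Q)); lia.
  - intros z x Hz Hx. rewrite HR by assumption.
    rewrite (fsum_ext _ _ (fun y' => fsum (length Q) (fun y =>
      nth y Q zcol x * b2R (merge_index i j y =? y')%nat * b2R (f y' =? z)%nat))).
    2:{ intros y' Hy'. rewrite nth_merge, Rmult_comm, <- fsum_scal by lia.
        apply fsum_ext. intros. ring. }
    rewrite fsum_swap. apply fsum_ext. intros y Hy.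
    rewrite (fsum_ext _ _ (fun y' => nth y Q zcol x * b2R (f y' =? z)%nat * b2R (y' =? merge_index i j y)%nat)).
    + apply fsum_indicator, (merge_index_lt i j (length Q)); lia.
    + intros y' _. rewrite (Nat.eqb_sym y'). ring.
Qed.

Lemma output_map_degraded nx f W R : output_map nx f W R -> degraded nx R W.
Proof.
  intros [Hf HR]. exists (fun y z => b2R (f y =? z)%nat). split; [|split].
  - intros y z _ _. unfold b2R. destruct (f y =? z)%nat; lra.
  - intros y Hy. rewrite <- (fsum_indicator _ (fun _ => 1) (f y) (Hf y Hy)).
    apply fsum_ext. intros z _. rewrite Nat.eqb_sym. ring.
  - exact HR.
Qed.

Lemma greedy_merge_output_map nx pi L W R :
  greedy_merge nx pi L W R -> exists f, output_map nx f W R.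
Proof.
  induction 1 as [Q _|Q Q' R _ [i [j [Hij [Hj [-> _]]]]] _ [f Hf]].
  - exists (fun y => y). apply output_map_id.
  - exists (fun y => f (merge_index i j y)). apply output_map_merge; [lia|exact Hf].
Qed.

Lemma greedy_merge_length nx pi L W R : greedy_merge nx pi L W R -> (length R <= L)%nat.
Proof. now induction 1. Qed.

Lemma exists_argmin {A} (g : A -> R) (l : list A) : l <> nil ->
  exists a, In a l /\ forall b, In b l -> g a <= g b.
Proof.
  induction l as [|a l IH]; intros Hl; [congruence|]. destruct l as [|a' l].
  - exists a. split; [now left|]. intros b [<-|[]]; lra.
  - destruct IH as [m [Hm Hmin]]; [discriminate|].
    destruct (Rle_dec (g a) (g m)).
    + exists a. split; [now left|]. intros b [<-|Hb]; [lra|]. specialize (Hmin b Hb). lra.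
    + exists m. split; [now right|]. intros b [<-|Hb]; [lra|]. auto.
Qed.

Definition index_pairs (n : nat) : list (nat * nat) :=
  flat_map (fun j => map (fun i => (i, j)) (seq 0 j)) (seq 0 n).

Lemma in_index_pairs n i j : In (i, j) (index_pairs n) <-> (i < j < n)%nat.
Proof.
  unfold index_pairs. rewrite in_flat_map. split.
  - intros [j' [Hj' [i' [[= <- <-] Hi']]%in_map_iff]]. apply in_seq in Hj', Hi'. lia.
  - intros H. exists j. split; [apply in_seq; lia|]. apply in_map_iff. exists i. split; [easy|].
    apply in_seq; lia.
Qed.

Lemma greedy_merge_exists nx pi L W : (1 <= L)%nat -> exists R, greedy_merge nx pi L W R.
Proof.
  intros HL. remember (length W) as n eqn:En. revert W En.
  induction n as [n IH] using lt_wf_ind. intros W En.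
  destruct (le_lt_dec (length W) L) as [Hle|Hlt]; [exists W; now constructor|].
  destruct (exists_argmin (fun p => MI nx pi W - MI nx pi (merge W (fst p) (snd p)))
              (index_pairs (length W))) as [[i j] [Hin Hmin]].
  { intros E. assert (H01 : In (0, 1)%nat (index_pairs (length W))) by (apply in_index_pairs; lia).
    now rewrite E in H01. }
  apply in_index_pairs in Hin.
  destruct (IH (length (merge W i j))) with (W := merge W i j) as [R HR];
    [rewrite length_merge; lia|reflexivity|].
  exists R. apply gm_step with (Q' := merge W i j); [exact Hlt| |exact HR].
  exists i, j. repeat split; [lia|lia|].
  intros i' j' H1 H2. apply (Hmin (i', j')), in_index_pairs. lia.
Qed.

Lemma ln_le_minus_one y : 0 < y -> ln y <= y - 1.
Proof. intros Hy. pose proof (exp_ineq1_le (ln y)). rewrite exp_ln in H by exact Hy. lra. Qed.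

Lemma Rdiv_le_0_compat a b : 0 <= a -> 0 < b -> 0 <= a / b.
Proof. intros Ha Hb. apply Rmult_le_pos; [exact Ha|]. now apply Rlt_le, Rinv_0_lt_compat. Qed.

Lemma ln_div a b : 0 < a -> 0 < b -> ln (a / b) = ln a - ln b.
Proof.
  intros Ha Hb. unfold Rdiv. rewrite ln_mult, ln_Rinv; [ring|exact Hb|exact Ha|].
  now apply Rinv_0_lt_compat.
Qed.

Lemma mi_term_sub_le p w A q : 0 < p -> 0 <= w -> 0 < A -> 0 < q ->
  mi_term p w A - p * w * ln q <= p * (w * (w / (A * q) - 1)).
Proof.
  intros Hp Hw HA Hq. unfold mi_term. destruct (Req_EM_T w 0) as [->|Hw0]; [apply Req_le; ring|].
  assert (Hwq : 0 < w / (A * q)) by (apply Rdiv_lt_0_compat; nra).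
  assert (E : ln (w / A) - ln q = ln (w / (A * q))) by (rewrite !ln_div, ln_mult by nra; ring).
  pose proof (ln_le_minus_one _ Hwq).
  replace (p * w * ln (w / A) - p * w * ln q) with (p * (w * ln (w / (A * q)))) by (rewrite <- E; ring).
  apply Rmult_le_compat_l; [lra|]. apply Rmult_le_compat_l; lra.
Qed.

(* Bounding each [ln] by [ln y <= y - 1] leaves a chi-square type expression, which
   in the variables [sa = sqrt (wa / A)], [sb = sqrt (wb / B)] equals
   [(A + B) (sa - sb)^2 - (sa - sb)^2 (A sa - B sb)^2 / (wa + wb)]. *)
Lemma merge_term_le p wa wb A B : 0 < p -> 0 <= wa -> 0 <= wb -> 0 < A -> 0 < B ->
  mi_term p wa A + mi_term p wb B - mi_term p (wa + wb) (A + B)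
  <= (A + B) * (sqrt (p * wa / A) - sqrt (p * wb / B)) ^ 2.
Proof.
  intros Hp Ha Hb HA HB.
  assert (0 <= (A + B) * (sqrt (p * wa / A) - sqrt (p * wb / B)) ^ 2)
    by (apply Rmult_le_pos; [lra|apply pow2_ge_0]).
  destruct (Req_EM_T (wa + wb) 0) as [HS|HS].
  { replace wa with 0 in * by lra. replace wb with 0 in * by lra.
    unfold mi_term. rewrite Rplus_0_r. destruct (Req_EM_T 0 0); [lra|congruence]. }
  set (S := wa + wb) in *. set (q := S / (A + B)).
  assert (Hq : 0 < q) by (apply Rdiv_lt_0_compat; unfold S in *; lra).
  assert (ES : mi_term p S (A + B) = p * S * ln q) by (unfold mi_term; now destruct (Req_EM_T S 0)).
  pose proof (mi_term_sub_le p wa A q Hp Ha HA Hq) as Ta.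
  pose proof (mi_term_sub_le p wb B q Hp Hb HB Hq) as Tb.
  set (sa := sqrt (wa / A)). set (sb := sqrt (wb / B)).
  assert (Ewa : wa = A * (sa * sa)) by (unfold sa; rewrite sqrt_sqrt; [field|apply Rdiv_le_0_compat]; lra).
  assert (Ewb : wb = B * (sb * sb)) by (unfold sb; rewrite sqrt_sqrt; [field|apply Rdiv_le_0_compat]; lra).
  assert (Chi2 : wa * (wa / (A * q) - 1) + wb * (wb / (B * q) - 1) =
                 (A + B) * (sa - sb) ^ 2 - (sa - sb) ^ 2 * (A * sa - B * sb) ^ 2 / S).
  { unfold q, S in *. rewrite Ewa, Ewb in *. field. lra. }
  assert (0 <= (sa - sb) ^ 2 * (A * sa - B * sb) ^ 2 / S)
    by (apply Rdiv_le_0_compat; [apply Rmult_le_pos; apply pow2_ge_0|unfold S in *; lra]).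
  assert (Hsp : forall w C, 0 <= w -> 0 < C -> sqrt (p * w / C) = sqrt p * sqrt (w / C))
    by (intros; rewrite <- sqrt_mult by (lra || now apply Rdiv_le_0_compat); f_equal; field; lra).
  rewrite ES, (Hsp wa A), (Hsp wb B) by lra. fold sa sb.
  replace ((A + B) * (sqrt p * sa - sqrt p * sb) ^ 2)
    with ((sqrt p * sqrt p) * ((A + B) * (sa - sb) ^ 2)) by ring.
  rewrite sqrt_sqrt by lra. unfold S in *. nra.
Qed.

Definition mi_col nx pi (c : column) : R := fsum nx (fun x => mi_term (pi x) (c x) (out_prob nx pi c)).

Definition post_sqrt nx pi (c : column) (x : nat) : R := sqrt (pi x * c x / out_prob nx pi c).

Lemma MI_merge_loss nx pi Q i j : (i < j < length Q)%nat ->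
  MI nx pi Q - MI nx pi (merge Q i j) =
  mi_col nx pi (nth i Q zcol) + mi_col nx pi (nth j Q zcol) - mi_col nx pi (merged_col Q i j).
Proof.
  intros H. change (MI nx pi Q) with (sumR (map (mi_col nx pi) Q)).
  change (MI nx pi (merge Q i j)) with (sumR (map (mi_col nx pi) (merge Q i j))).
  rewrite sumR_map_merge by exact H. ring.
Qed.

Lemma mi_col_merge_le nx pi (ca cb : column) :
  (forall x, (x < nx)%nat -> 0 < pi x) ->
  (forall x, (x < nx)%nat -> 0 <= ca x) -> (forall x, (x < nx)%nat -> 0 <= cb x) ->
  0 < out_prob nx pi ca -> 0 < out_prob nx pi cb ->
  mi_col nx pi ca + mi_col nx pi cb - mi_col nx pi (fun x => ca x + cb x) <=
  (out_prob nx pi ca + out_prob nx pi cb) *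
  fsum nx (fun x => (post_sqrt nx pi ca x - post_sqrt nx pi cb x) ^ 2).
Proof.
  intros Hpi Ha Hb HA HB. unfold mi_col.
  assert (Eo : out_prob nx pi (fun x => ca x + cb x) = out_prob nx pi ca + out_prob nx pi cb).
  { unfold out_prob. rewrite <- fsum_add. apply fsum_ext. intros; ring. }
  rewrite Eo, <- fsum_scal.
  match goal with |- ?a + ?b - ?c <= _ =>
    replace (a + b - c) with (a + b + (-1) * c) by ring end.
  rewrite <- fsum_scal, <- !fsum_add. apply fsum_le. intros x Hx.
  pose proof (merge_term_le (pi x) (ca x) (cb x) _ _ (Hpi x Hx) (Ha x Hx) (Hb x Hx) HA HB).
  unfold post_sqrt. lra.
Qed.

Lemma post_sqrt_unit nx pi c : is_input_dist nx pi ->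
  (forall x, (x < nx)%nat -> 0 <= c x) -> 0 < out_prob nx pi c ->
  (forall x, (x < nx)%nat -> 0 <= post_sqrt nx pi c x <= 1) /\
  fsum nx (fun x => post_sqrt nx pi c x ^ 2) = 1.
Proof.
  intros [Hpi _] Hc HP.
  assert (Sq : forall x, (x < nx)%nat -> post_sqrt nx pi c x ^ 2 = pi x * c x / out_prob nx pi c).
  { intros x Hx. unfold post_sqrt. rewrite pow2_sqrt; [reflexivity|].
    apply Rdiv_le_0_compat; [apply Rmult_le_pos|]; [apply Rlt_le, Hpi| apply Hc|]; auto. }
  assert (Unit : fsum nx (fun x => post_sqrt nx pi c x ^ 2) = 1).
  { rewrite (fsum_ext _ _ (fun x => / out_prob nx pi c * (pi x * c x))).
    - rewrite fsum_scal. fold (out_prob nx pi c). field. lra.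
    - intros x Hx. rewrite Sq by exact Hx. unfold Rdiv. ring. }
  split; [|exact Unit]. intros x Hx.
  pose proof (sqrt_pos (pi x * c x / out_prob nx pi c)).
  rewrite (fsum_split _ _ x Hx) in Unit.
  assert (0 <= fsum nx (fun y => if (y =? x)%nat then 0 else post_sqrt nx pi c y ^ 2))
    by (apply fsum_nonneg; intros y _; destruct (y =? x)%nat; [lra|apply pow2_ge_0]).
  unfold post_sqrt in *. nra.
Qed.

Lemma fsum_off_const n j c : (j < n)%nat ->
  fsum n (fun x => if (x =? j)%nat then 0 else c) = (INR n - 1) * c.
Proof. intros Hj. pose proof (fsum_split n (fun _ => c) j Hj). rewrite fsum_const in H. lra. Qed.

Section UnitVectors.

Variables (n j : nat).
Hypothesis Hj : (j < n)%nat.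

Lemma unit_vector_max_pos (u : nat -> R) : (forall x, (x < n)%nat -> 0 <= u x) ->
  fsum n (fun x => u x ^ 2) = 1 -> (forall i, (i < n)%nat -> u i <= u j) -> 0 < u j.
Proof.
  intros Hu Su Mu. destruct (Rle_lt_dec (u j) 0) as [Hle|]; [|assumption].
  assert (fsum n (fun x => u x ^ 2) <= fsum n (fun _ => 0)).
  { apply fsum_le. intros x Hx. pose proof (Mu x Hx). pose proof (Hu x Hx). nra. }
  rewrite fsum_const in H. lra.
Qed.

(* The squares sum to [1], so the gap [u j^2 - v j^2] is paid for by the other coordinates. *)
Lemma max_coord_gap_le (u v : nat -> R) (h : R) :
  (forall x, (x < n)%nat -> 0 <= u x) -> (forall x, (x < n)%nat -> 0 <= v x) ->
  fsum n (fun x => u x ^ 2) = 1 -> fsum n (fun x => v x ^ 2) = 1 ->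
  (forall i, (i < n)%nat -> u i <= u j) -> (forall i, (i < n)%nat -> v i <= v j) ->
  (forall i, (i < n)%nat -> i <> j -> - h <= u i - v i <= h) ->
  u j - v j <= (INR n - 1) * h.
Proof.
  intros Hu Hv Su Sv Mu Mv Cuv.
  pose proof (unit_vector_max_pos u Hu Su Mu). pose proof (unit_vector_max_pos v Hv Sv Mv).
  rewrite (fsum_split n _ j Hj) in Su. rewrite (fsum_split n _ j Hj) in Sv.
  assert (Gap : u j ^ 2 - v j ^ 2 <= (INR n - 1) * (h * (u j + v j))).
  { rewrite <- (fsum_off_const n j) by exact Hj.
    replace (u j ^ 2 - v j ^ 2) with (fsum n (fun x => if (x =? j)%nat then 0 else v x ^ 2)
      + (-1) * fsum n (fun x => if (x =? j)%nat then 0 else u x ^ 2)) by lra.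
    rewrite <- fsum_scal, <- fsum_add. apply fsum_le. intros x Hx.
    destruct (Nat.eqb_spec x j) as [|Hxj]; [lra|].
    pose proof (Cuv x Hx Hxj). pose proof (Mu x Hx). pose proof (Mv x Hx).
    pose proof (Hu x Hx). pose proof (Hv x Hx). nra. }
  apply (Rmult_le_reg_r (u j + v j)); nra.
Qed.

Lemma unit_vectors_close (s t : nat -> R) (h : R) : 0 <= h ->
  (forall x, (x < n)%nat -> 0 <= s x) -> (forall x, (x < n)%nat -> 0 <= t x) ->
  fsum n (fun x => s x ^ 2) = 1 -> fsum n (fun x => t x ^ 2) = 1 ->
  (forall i, (i < n)%nat -> s i <= s j) -> (forall i, (i < n)%nat -> t i <= t j) ->
  (forall i, (i < n)%nat -> i <> j -> - h <= s i - t i <= h) ->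
  fsum n (fun x => (s x - t x) ^ 2) <= INR n * (INR n - 1) * h ^ 2.
Proof.
  intros Hh Hs Ht Ss St Ms Mt Close.
  assert (Hn : 1 <= INR n) by (apply (le_INR 1); lia).
  pose proof (max_coord_gap_le s t h Hs Ht Ss St Ms Mt Close) as G1.
  assert (Close' : forall i, (i < n)%nat -> i <> j -> - h <= t i - s i <= h)
    by (intros i Hi Hne; pose proof (Close i Hi Hne); lra).
  pose proof (max_coord_gap_le t s h Ht Hs St Ss Mt Ms Close') as G2.
  assert (Rest : fsum n (fun x => if (x =? j)%nat then 0 else (s x - t x) ^ 2) <= (INR n - 1) * h ^ 2).
  { rewrite <- (fsum_off_const n j) by exact Hj. apply fsum_le. intros x Hx.
    destruct (Nat.eqb_spec x j) as [|Hxj]; [lra|]. pose proof (Close x Hx Hxj). nra. }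
  rewrite (fsum_split n _ j Hj). nra.
Qed.

End UnitVectors.

Fixpoint argmax (s : nat -> R) (k : nat) : nat :=
  match k with
  | O => O
  | S k' => let j := argmax s k' in if Rle_dec (s j) (s k') then k' else j
  end.

Lemma argmax_spec s k : (0 < k)%nat ->
  (argmax s k < k)%nat /\ forall i, (i < k)%nat -> s i <= s (argmax s k).
Proof.
  induction k as [|k IH]; intros Hk; [lia|]. destruct (Nat.eq_dec k 0) as [->|Hk0].
  - cbn. destruct (Rle_dec (s 0%nat) (s 0%nat)); split; try lia;
      intros i Hi; replace i with 0%nat by lia; lra.
  - destruct (IH ltac:(lia)) as [Hlt Hmax]. cbn [argmax].
    destruct (Rle_dec (s (argmax s k)) (s k)) as [Hle|Hgt]; split; try lia;
      intros i Hi; destruct (Nat.eq_dec i k) as [->|]; try lra;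
      specialize (Hmax i ltac:(lia)); lra.
Qed.

Definition digit (m : nat) (v : R) : nat := Nat.min (m - 1) (Z.to_nat (Int_part (v * INR m))).

Lemma digit_lt m v : (1 <= m)%nat -> (digit m v < m)%nat.
Proof. intros Hm. unfold digit. lia. Qed.

Lemma digit_spec m v : (1 <= m)%nat -> 0 <= v <= 1 ->
  INR (digit m v) <= v * INR m <= INR (digit m v) + 1.
Proof.
  intros Hm Hv. unfold digit. destruct (base_Int_part (v * INR m)) as [B1 B2].
  set (z := Int_part (v * INR m)) in *.
  assert (Hm1 : 1 <= INR m) by (apply (le_INR 1); exact Hm).
  assert (Hz : (0 <= z)%Z) by (assert (Hlt : -1 < IZR z) by nra; apply lt_IZR in Hlt; lia).
  assert (Ez : INR (Z.to_nat z) = IZR z) by (rewrite INR_IZR_INZ, Z2Nat.id; auto).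
  destruct (Nat.le_gt_cases (Z.to_nat z) (m - 1)).
  - rewrite Nat.min_r, Ez by exact H. lra.
  - rewrite Nat.min_l, minus_INR by lia. simpl.
    assert (INR m <= INR (Z.to_nat z)) by (apply le_INR; lia). nra.
Qed.

Lemma digit_close m v w : (1 <= m)%nat -> 0 <= v <= 1 -> 0 <= w <= 1 -> digit m v = digit m w ->
  - (1 / INR m) <= v - w <= 1 / INR m.
Proof.
  intros Hm Hv Hw E. pose proof (digit_spec m v Hm Hv). pose proof (digit_spec m w Hm Hw).
  rewrite E in H. assert (Hm1 : 1 <= INR m) by (apply (le_INR 1); exact Hm).
  replace (1 / INR m) with (/ INR m * 1) by (field; lra).
  split; apply (Rmult_le_reg_l (INR m)); try lra;
    rewrite <- ?Ropp_mult_distr_r, <- Rmult_assoc, Rinv_r, ?Rmult_1_l by lra; nra.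
Qed.

Fixpoint digit_strings (k m : nat) : list (list nat) :=
  match k with
  | O => [[]]
  | S k' => flat_map (fun d => map (cons d) (digit_strings k' m)) (seq 0 m)
  end.

Lemma length_digit_strings k m : length (digit_strings k m) = (m ^ k)%nat.
Proof.
  induction k as [|k IH]; [reflexivity|]. cbn [digit_strings].
  rewrite (flat_map_constant_length (c := (m ^ k)%nat)), length_seq; [reflexivity|].
  intros d _. now rewrite length_map.
Qed.

Lemma in_digit_strings k m l : length l = k -> (forall d, In d l -> (d < m)%nat) ->
  In l (digit_strings k m).
Proof.
  revert l; induction k as [|k IH]; intros [|d l] Hl Hd; try discriminate; [now left|].
  cbn [digit_strings]. apply in_flat_map. exists d. split.
  - apply in_seq. specialize (Hd d (or_introl eq_refl)). lia.
  - apply in_map, IH; [now injection Hl|]. intros e He. apply Hd. now right.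
Qed.

Definition skip (j r : nat) : nat := if (r <? j)%nat then r else S r.

Definition cell (m n : nat) (s : nat -> R) : list nat :=
  argmax s n :: map (fun r => digit m (s (skip (argmax s n) r))) (seq 0 (n - 1)).

Definition all_cells (m n : nat) : list (list nat) :=
  flat_map (fun j => map (cons j) (digit_strings (n - 1) m)) (seq 0 n).

Lemma length_all_cells m n : length (all_cells m n) = (n * m ^ (n - 1))%nat.
Proof.
  unfold all_cells. rewrite (flat_map_constant_length (c := (m ^ (n - 1))%nat)), length_seq; [easy|].
  intros j _. now rewrite length_map, length_digit_strings.
Qed.

Lemma cell_in_all_cells m n s : (1 <= m)%nat -> (1 <= n)%nat -> In (cell m n s) (all_cells m n).
Proof.
  intros Hm Hn. unfold cell. apply in_flat_map. exists (argmax s n). split.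
  - apply in_seq. pose proof (proj1 (argmax_spec s n ltac:(lia))). lia.
  - apply in_map, in_digit_strings; [now rewrite length_map, length_seq|].
    intros d [r [<- _]]%in_map_iff. now apply digit_lt.
Qed.

Lemma cell_inj m n s t : (1 <= n)%nat -> cell m n s = cell m n t ->
  argmax s n = argmax t n /\
  forall i, (i < n)%nat -> i <> argmax s n -> digit m (s i) = digit m (t i).
Proof.
  intros Hn E. injection E as Ej Ed. split; [exact Ej|].
  intros i Hi Hne. set (j := argmax s n) in *. rewrite <- Ej in Ed.
  assert (Hjn : (j < n)%nat) by (apply argmax_spec; lia).
  set (r := if (i <? j)%nat then i else (i - 1)%nat).
  assert (Hr : (r < n - 1)%nat /\ skip j r = i).
  { unfold r, skip. destruct (Nat.ltb_spec i j) as [Hij|Hij].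
    - rewrite (proj2 (Nat.ltb_lt i j) Hij). lia.
    - rewrite (proj2 (Nat.ltb_ge (i - 1) j)) by lia. lia. }
  destruct Hr as [Hr Hskip].
  assert (Hnth : forall f : nat -> nat, nth r (map f (seq 0 (n - 1))) 0%nat = f r).
  { intros f. rewrite (nth_indep _ 0%nat (f 0%nat)) by (rewrite length_map, length_seq; lia).
    now rewrite map_nth, seq_nth by lia. }
  apply (f_equal (fun l => nth r l 0%nat)) in Ed. rewrite !Hnth, Hskip in Ed. exact Ed.
Qed.

Lemma pigeonhole {A B} (l : list A) (h : A -> B) (D : list B) :
  NoDup l -> (forall a, In a l -> In (h a) D) -> (length D < length l)%nat ->
  exists a b, In a l /\ In b l /\ a <> b /\ h a = h b.
Proof.
  intros Hnd Hin Hlen. apply NNPP. intros Hno.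
  assert (Hnd' : NoDup (map h l)).
  { apply NoDup_map_NoDup_ForallPairs; [|exact Hnd]. intros a b Ha Hb Eh.
    apply NNPP. intros Hab. apply Hno. now exists a, b. }
  assert (Hincl : incl (map h l) D) by (intros y [a [<- Ha]]%in_map_iff; auto).
  pose proof (NoDup_incl_length Hnd' Hincl). rewrite length_map in H. lia.
Qed.

Lemma same_cell_dist nx pi (ca cb : column) m : (2 <= nx)%nat -> (1 <= m)%nat -> is_input_dist nx pi ->
  (forall x, (x < nx)%nat -> 0 <= ca x) -> 0 < out_prob nx pi ca ->
  (forall x, (x < nx)%nat -> 0 <= cb x) -> 0 < out_prob nx pi cb ->
  cell m nx (post_sqrt nx pi ca) = cell m nx (post_sqrt nx pi cb) ->
  fsum nx (fun x => (post_sqrt nx pi ca x - post_sqrt nx pi cb x) ^ 2)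
  <= INR nx * (INR nx - 1) * (1 / INR m) ^ 2.
Proof.
  intros Hn Hm Hpi Ha HA Hb HB Ec.
  destruct (post_sqrt_unit nx pi ca Hpi Ha HA) as [Ra Ua].
  destruct (post_sqrt_unit nx pi cb Hpi Hb HB) as [Rb Ub].
  destruct (cell_inj m nx _ _ ltac:(lia) Ec) as [Ej Ed].
  destruct (argmax_spec (post_sqrt nx pi ca) nx ltac:(lia)) as [Hj Ma].
  destruct (argmax_spec (post_sqrt nx pi cb) nx ltac:(lia)) as [_ Mb]. rewrite <- Ej in Mb.
  assert (Hm1 : 1 <= INR m) by (apply (le_INR 1); exact Hm).
  apply unit_vectors_close with (j := argmax (post_sqrt nx pi ca) nx); auto.
  - apply Rdiv_le_0_compat; lra.
  - intros x Hx. apply Ra, Hx.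
  - intros x Hx. apply Rb, Hx.
  - intros i Hi Hne. apply digit_close; auto.
Qed.

Lemma sumR_map_fsum {A} (l : list A) n (g : A -> nat -> R) :
  sumR (map (fun c => fsum n (g c)) l) = fsum n (fun x => sumR (map (fun c => g c x) l)).
Proof.
  induction l as [|c l IH]; cbn [map].
  - rewrite fsum_const. change (0 = INR n * 0). ring.
  - rewrite sumR_cons, IH, <- fsum_add. apply fsum_ext. intros. now rewrite sumR_cons.
Qed.

Lemma sumR_out_prob nx pi Q : is_input_dist nx pi -> is_channel nx Q ->
  sumR (map (out_prob nx pi) Q) = 1.
Proof.
  intros [_ Hpi] [_ HQ]. unfold out_prob.
  change (sumR (map (fun c => fsum nx (fun x => pi x * c x)) Q) = 1).
  rewrite sumR_map_fsum, <- Hpi. apply fsum_ext. intros x Hx.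
  rewrite sumR_map_scal. specialize (HQ x Hx).
  change (sumR (map (fun c : column => c x) Q) = 1) in HQ.
  transitivity (pi x * 1); [f_equal; exact HQ|ring].
Qed.

Lemma sumR_map_filter_const {A} (p : A -> bool) (c : R) l :
  sumR (map (fun k => if p k then 0 else c) l) + INR (length (filter p l)) * c = INR (length l) * c.
Proof.
  induction l as [|a l IH]; [cbn; lra|]. cbn [map filter]. rewrite sumR_cons.
  destruct (p a); cbn [length]; rewrite ?S_INR; lra.
Qed.

Definition light nx pi (Q : channel) (k : nat) : bool :=
  if Rle_dec (out_prob nx pi (nth k Q zcol)) (2 / INR (length Q)) then true else false.

Lemma more_than_half_light nx pi Q : is_input_dist nx pi -> proper_channel nx pi Q ->
  (1 <= length Q)%nat ->
  (length Q < 2 * length (filter (light nx pi Q) (seq 0 (length Q))))%nat.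
Proof.
  intros Hpi [HQ Hpos] HK. set (K := length Q) in *.
  pose proof (sumR_out_prob nx pi Q Hpi HQ) as Hsum.
  rewrite (sumR_as_fsum _ _ zcol) in Hsum. fold K in Hsum.
  assert (HK1 : 1 <= INR K) by (apply (le_INR 1); exact HK).
  assert (Heavy : fsum K (fun k => if light nx pi Q k then 0 else 2 / INR K) < 1).
  { rewrite <- Hsum. apply fsum_lt; [lia|]. intros k Hk. unfold light. fold K.
    destruct (Rle_dec (out_prob nx pi (nth k Q zcol)) (2 / INR K)); [|lra].
    apply Hpos, nth_In. exact Hk. }
  pose proof (sumR_map_filter_const (light nx pi Q) (2 / INR K) (seq 0 K)) as C.
  change (sumR (map _ (seq 0 K))) with (fsum K (fun k => if light nx pi Q k then 0 else 2 / INR K)) in C.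
  rewrite length_seq in C.
  set (s := length (filter (light nx pi Q) (seq 0 K))) in *.
  assert (Hs : INR K < 2 * INR s).
  { replace (INR K * (2 / INR K)) with 2 in C by (field; lra).
    apply (Rmult_lt_reg_r (2 / INR K)); [apply Rdiv_lt_0_compat; lra|].
    replace (2 * INR s * (2 / INR K)) with (2 * (INR s * (2 / INR K))) by ring.
    replace (INR K * (2 / INR K)) with 2 by (field; lra). lra. }
  apply INR_lt. rewrite mult_INR. exact Hs.
Qed.

Lemma exists_threshold (P : nat -> Prop) a b : (forall m, P m \/ ~ P m) ->
  P a -> ~ P b -> (a < b)%nat -> exists m, (a <= m < b)%nat /\ P m /\ ~ P (S m).
Proof.
  intros Hdec Ha Hb Hab. remember (b - a)%nat as d eqn:Ed. revert a Ha Hab Ed.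
  induction d as [|d IH]; intros a Ha Hab Ed; [lia|].
  destruct (Hdec (S a)) as [HS|HS]; [|exists a; repeat split; auto; lia].
  destruct (Nat.eq_dec (S a) b) as [<-|Hne]; [contradiction|].
  destruct (IH (S a)) as [m [Hm HPm]]; [exact HS|lia|lia|]. exists m. split; [lia|exact HPm].
Qed.

Definition rate_exp (n : nat) : R := 2 / (INR n - 1).

Definition loss_const (n : nat) : R :=
  16 * INR n * (INR n - 1) * Rpower (2 * INR n) (rate_exp n) / rate_exp n.

Lemma rate_exp_pos n : (2 <= n)%nat -> 0 < rate_exp n.
Proof.
  intros Hn. assert (2 <= INR n) by (apply (le_INR 2); exact Hn).
  apply Rdiv_lt_0_compat; lra.
Qed.

Lemma Rpower_pos x y : 0 < Rpower x y.
Proof. apply exp_pos. Qed.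

(* [K^-a / K] is dominated by the increment of the primitive [- K^-a / a] of [K^(-a-1)]. *)
Lemma Rpower_telescope K a : 1 < K -> 0 < a ->
  Rpower K (- a) / K <= / a * (Rpower (K - 1) (- a) - Rpower K (- a)).
Proof.
  intros HK Ha. unfold Rpower.
  assert (Hl : ln (K - 1) - ln K <= - / K).
  { rewrite <- ln_div by lra. pose proof (ln_le_minus_one ((K - 1) / K)).
    replace ((K - 1) / K - 1) with (- / K) in H by (field; lra).
    apply H, Rdiv_lt_0_compat; lra. }
  assert (E1 : exp (- a * ln K) * (1 + a / K) <= exp (- a * ln (K - 1))).
  { replace (- a * ln (K - 1)) with (- a * ln K + - a * (ln (K - 1) - ln K)) by ring.
    rewrite exp_plus. apply Rmult_le_compat_l; [apply Rlt_le, exp_pos|].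
    apply Rle_trans with (1 + - a * (ln (K - 1) - ln K)); [|apply exp_ineq1_le].
    assert (0 <= a / K) by (apply Rdiv_le_0_compat; lra). unfold Rdiv in *. nra. }
  pose proof (exp_pos (- a * ln K)).
  apply (Rmult_le_reg_l a); [exact Ha|].
  replace (a * (/ a * (exp (- a * ln (K - 1)) - exp (- a * ln K))))
    with (exp (- a * ln (K - 1)) - exp (- a * ln K)) by (field; lra).
  replace (a * (exp (- a * ln K) / K)) with (exp (- a * ln K) * (a / K)) by (field; lra).
  lra.
Qed.

Lemma inv_sq_le_Rpower n K m : (2 <= n)%nat -> (1 <= m)%nat -> (0 < K)%nat ->
  (K < 2 * n * (m + 1) ^ (n - 1))%nat ->
  (1 / INR m) ^ 2 <= 4 * Rpower (2 * INR n) (rate_exp n) * Rpower (INR K) (- rate_exp n).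
Proof.
  intros Hn Hm HK Hb.
  assert (Hn2 : 2 <= INR n) by (apply (le_INR 2); exact Hn).
  assert (Hm1 : 1 <= INR m) by (apply (le_INR 1); exact Hm).
  assert (HK1 : 0 < INR K) by (apply lt_0_INR; exact HK).
  set (a := rate_exp n). set (x := INR (m + 1)).
  assert (Hx : x = INR m + 1) by (unfold x; rewrite plus_INR; reflexivity).
  set (P := Rpower (INR K / (2 * INR n)) a).
  assert (HP : P <= x ^ 2).
  { assert (E : Rpower (x ^ (n - 1)) a = x ^ 2).
    { rewrite <- !Rpower_pow, Rpower_mult by lra. f_equal.
      unfold a, rate_exp. rewrite minus_INR by lia. simpl. field. lra. }
    rewrite <- E. apply Rle_Rpower_l; [apply Rlt_le, rate_exp_pos; exact Hn|]. split.
    - apply Rdiv_lt_0_compat; lra.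
    - apply lt_INR in Hb. rewrite !mult_INR, pow_INR in Hb. fold x in Hb. simpl in Hb.
      apply Rlt_le. apply (Rmult_lt_reg_r (2 * INR n)); [lra|].
      unfold Rdiv. rewrite Rmult_assoc, Rinv_l by lra. lra. }
  assert (Split : Rpower (INR K) a = P * Rpower (2 * INR n) a).
  { unfold P. rewrite Rpower_mult_distr by (try apply Rdiv_lt_0_compat; lra). f_equal. field. lra. }
  assert (HP0 : 0 < P) by apply Rpower_pos. pose proof (Rpower_pos (2 * INR n) a).
  rewrite Rpower_Ropp, Split.
  replace (4 * Rpower (2 * INR n) a * / (P * Rpower (2 * INR n) a)) with (4 * / P)
    by (field; split; lra).
  replace ((1 / INR m) ^ 2) with (4 * / (2 * INR m) ^ 2) by (field; lra).
  apply Rmult_le_compat_l; [lra|]. apply Rinv_le_contravar; [exact HP0|].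
  apply Rle_trans with (x ^ 2); [exact HP|]. apply pow_incr. lra.
Qed.

Lemma merge_rate n K m : (2 <= n)%nat -> (1 <= m)%nat -> (2 * n < K)%nat ->
  (K < 2 * n * (m + 1) ^ (n - 1))%nat ->
  4 / INR K * (INR n * (INR n - 1) * (1 / INR m) ^ 2) <=
  loss_const n * (Rpower (INR (K - 1)) (- rate_exp n) - Rpower (INR K) (- rate_exp n)).
Proof.
  intros Hn Hm HK Hb.
  assert (Hn2 : 2 <= INR n) by (apply (le_INR 2); exact Hn).
  assert (HK1 : 4 < INR K) by (replace 4 with (INR 4) by (simpl; lra); apply lt_INR; lia).
  pose proof (rate_exp_pos n Hn) as Ha. set (a := rate_exp n) in *.
  pose proof (inv_sq_le_Rpower n K m Hn Hm ltac:(lia) Hb) as Hinv. fold a in Hinv.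
  pose proof (Rpower_telescope (INR K) a ltac:(lra) Ha) as T.
  replace (INR K - 1) with (INR (K - 1)) in T by (rewrite minus_INR by lia; reflexivity).
  set (C := 16 * INR n * (INR n - 1) * Rpower (2 * INR n) a).
  assert (0 <= C) by (apply Rmult_le_pos; [nra|apply Rlt_le, Rpower_pos]).
  apply Rle_trans with (C * (Rpower (INR K) (- a) / INR K)).
  - replace (C * (Rpower (INR K) (- a) / INR K))
      with (4 / INR K * (INR n * (INR n - 1) * (4 * Rpower (2 * INR n) a * Rpower (INR K) (- a))))
      by (unfold C; field; lra).
    apply Rmult_le_compat_l; [apply Rdiv_le_0_compat; lra|].
    apply Rmult_le_compat_l; [nra|exact Hinv].
  - unfold loss_const. fold a C.
    replace (C / a * (Rpower (INR (K - 1)) (- a) - Rpower (INR K) (- a)))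
      with (C * (/ a * (Rpower (INR (K - 1)) (- a) - Rpower (INR K) (- a)))) by (field; lra).
    apply Rmult_le_compat_l; [exact H|exact T].
Qed.

Lemma PI_gt_3 : 3 < PI.
Proof. pose proof PI2_3_2. lra. Qed.

Lemma gamma_half_bound k : (1 <= k)%nat -> 0 < gamma_half (k + 2) <= sqrt (PI * INR k) ^ k.
Proof.
  pose proof PI_gt_3 as HPI.
  induction k as [k IH] using lt_wf_ind. intros Hk.
  destruct k as [|[|[|k]]]; [lia| | |].
  - cbn. rewrite Rmult_1_r, Rmult_1_r. pose proof (sqrt_lt_R0 PI ltac:(lra)). lra.
  - cbn. rewrite !Rmult_1_r, sqrt_sqrt by nra. split; lra.
  - destruct (IH (S k) ltac:(lia) ltac:(lia)) as [G1 G2].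
    replace (S k + 2)%nat with (S (S (S k))) in G1, G2 by lia.
    replace (S (S (S k)) + 2)%nat with (S (S (S (S (S k))))) by lia.
    change (gamma_half (S (S (S (S (S k)))))) with (INR (S (S (S k))) / 2 * gamma_half (S (S (S k)))).
    assert (EK : INR (S (S (S k))) = INR (S k) + 2) by (rewrite !S_INR; ring).
    assert (HK : 1 <= INR (S k)) by (apply (le_INR 1); lia).
    split; [apply Rmult_lt_0_compat; [rewrite EK; lra|exact G1]|].
    set (y := sqrt (PI * INR (S (S (S k))))).
    assert (Hy : y * y = PI * INR (S (S (S k)))) by (apply sqrt_sqrt; rewrite EK; nra).
    assert (M : sqrt (PI * INR (S k)) ^ S k <= y ^ S k).
    { apply pow_incr. split; [apply sqrt_pos|]. apply sqrt_le_1_alt. rewrite EK. nra. }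
    replace (y ^ S (S (S k))) with (y * y * y ^ S k) by (cbn; ring). rewrite Hy.
    pose proof (pow_le y (S k) (sqrt_pos _)).
    apply Rle_trans with (INR (S (S (S k))) / 2 * y ^ S k);
      [apply Rmult_le_compat_l; [rewrite EK|]; lra|].
    apply Rmult_le_compat_r; [lra|]. rewrite EK. nra.
Qed.

Lemma Rpower_gamma_half_le n : (2 <= n)%nat ->
  Rpower (gamma_half (n + 1)) (rate_exp n) <= PI * (INR n - 1).
Proof.
  intros Hn. pose proof PI_gt_3.
  assert (Hn2 : 2 <= INR n) by (apply (le_INR 2); exact Hn).
  assert (EI : INR (n - 1) = INR n - 1) by (rewrite minus_INR by lia; reflexivity).
  destruct (gamma_half_bound (n - 1) ltac:(lia)) as [G1 G2].
  replace (n - 1 + 2)%nat with (n + 1)%nat in G1, G2 by lia. rewrite EI in G2.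
  set (y := sqrt (PI * (INR n - 1))) in *.
  assert (Hy : 0 < y) by (apply sqrt_lt_R0; nra).
  apply Rle_trans with (Rpower (y ^ (n - 1)) (rate_exp n)).
  - apply Rle_Rpower_l; [apply Rlt_le, rate_exp_pos; exact Hn|lra].
  - rewrite <- Rpower_pow, Rpower_mult, EI by exact Hy.
    replace ((INR n - 1) * rate_exp n) with (INR 2) by (unfold rate_exp; simpl; field; lra).
    rewrite Rpower_pow by exact Hy. unfold y. rewrite pow2_sqrt by nra. lra.
Qed.

Lemma sqrt_1_plus_sub_1_le t : 0 <= t -> sqrt (1 + t) - 1 <= t / 2.
Proof.
  intros Ht. enough (sqrt (1 + t) <= 1 + t / 2) by lra.
  rewrite <- (sqrt_pow2 (1 + t / 2)) by lra. apply sqrt_le_1_alt. nra.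
Qed.

(* The crude bounds [Gamma(1 + (n-1)/2)^(2/(n-1)) <= PI (n - 1)] and
   [sqrt (1 + t) - 1 <= t / 2] show that the paper's constant dominates ours. *)
Lemma loss_const_le_nu n : (2 <= n)%nat -> loss_const n <= nu n.
Proof.
  intros Hn. pose proof PI_gt_3 as HPI.
  assert (Hn2 : 2 <= INR n) by (apply (le_INR 2); exact Hn).
  pose proof (rate_exp_pos n Hn) as Ha. pose proof (Rpower_gamma_half_le n Hn) as RG.
  destruct (gamma_half_bound (n - 1) ltac:(lia)) as [G1 _].
  replace (n - 1 + 2)%nat with (n + 1)%nat in G1 by lia.
  set (a := rate_exp n) in *. set (G := gamma_half (n + 1)) in *.
  assert (EG : Rpower (2 * INR n / G) a = Rpower (2 * INR n) a / Rpower G a).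
  { unfold Rdiv. rewrite <- Rpower_mult_distr by (try apply Rinv_0_lt_compat; lra).
    f_equal. unfold Rpower. rewrite ln_Rinv, <- exp_Ropp by lra. f_equal. ring. }
  set (t := 1 / (2 * (INR n - 1))).
  assert (Ht : 0 < t) by (apply Rdiv_lt_0_compat; lra).
  set (d := sqrt (1 + t) - 1).
  assert (Hd0 : 0 < d).
  { unfold d. rewrite <- sqrt_1 at 2. pose proof (sqrt_lt_1_alt 1 (1 + t) ltac:(lra)). lra. }
  assert (Hd2 : 2 * d ^ 2 <= 1 / (8 * (INR n - 1) ^ 2)).
  { assert (d ^ 2 <= (t / 2) ^ 2) by (apply pow_incr; split; [lra|apply sqrt_1_plus_sub_1_le; lra]).
    replace (1 / (8 * (INR n - 1) ^ 2)) with (2 * (t / 2) ^ 2) by (unfold t; field; lra). lra. }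
  unfold nu. fold t d. change (2 / (INR n - 1)) with a. fold G. rewrite EG.
  unfold loss_const. fold a.
  set (R2 := Rpower (2 * INR n) a). set (RG' := Rpower G a) in *.
  assert (0 < R2) by apply Rpower_pos. assert (0 < RG') by apply Rpower_pos.
  replace (16 * INR n * (INR n - 1) * R2 / a)
    with (PI * INR n * (INR n - 1) * (8 * (INR n - 1) ^ 2) * (R2 / (PI * (INR n - 1))))
    by (unfold a, rate_exp; field; lra).
  apply Rmult_le_compat; [| apply Rdiv_le_0_compat; nra | |].
  - apply Rmult_le_pos; [|nra]. apply Rmult_le_pos; [|lra]. apply Rmult_le_pos; lra.
  - unfold Rdiv. apply Rmult_le_compat_l; [nra|].
    replace (8 * (INR n - 1) ^ 2) with (/ (1 / (8 * (INR n - 1) ^ 2))) by (field; lra).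
    apply Rinv_le_contravar; nra.
  - unfold Rdiv. apply Rmult_le_compat_l; [lra|]. apply Rinv_le_contravar; assumption.
Qed.

Lemma choose_resolution n K : (2 <= n)%nat -> (2 * n < K)%nat ->
  exists m, (1 <= m)%nat /\ (2 * n * m ^ (n - 1) <= K)%nat /\ (K < 2 * n * (m + 1) ^ (n - 1))%nat.
Proof.
  intros Hn HK.
  destruct (exists_threshold (fun m => (2 * n * m ^ (n - 1) <= K)%nat) 1 K) as [m [Hm [Hle Hgt]]].
  - intros m. destruct (le_dec (2 * n * m ^ (n - 1)) K); auto.
  - rewrite Nat.pow_1_l. lia.
  - intros H. assert (K <= K ^ (n - 1))%nat.
    { replace (n - 1)%nat with (S (n - 2)) by lia. rewrite Nat.pow_succ_r'.
      assert (1 <= K ^ (n - 2))%nat by (apply Nat.neq_0_lt_0, Nat.pow_nonzero; lia). nia. }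
    nia.
  - lia.
  - exists m. repeat split; [lia|exact Hle|]. rewrite Nat.add_1_r. lia.
Qed.

Lemma light_pair_same_cell nx pi Q m : (2 <= nx)%nat -> (1 <= m)%nat ->
  is_input_dist nx pi -> proper_channel nx pi Q -> (2 * nx * m ^ (nx - 1) <= length Q)%nat ->
  exists i j, (i < j < length Q)%nat /\ light nx pi Q i = true /\ light nx pi Q j = true /\
    cell m nx (post_sqrt nx pi (nth i Q zcol)) = cell m nx (post_sqrt nx pi (nth j Q zcol)).
Proof.
  intros Hn Hm Hpi HQ HK.
  assert (1 <= m ^ (nx - 1))%nat by (apply Nat.neq_0_lt_0, Nat.pow_nonzero; lia).
  pose proof (more_than_half_light nx pi Q Hpi HQ ltac:(nia)) as Hlight.
  destruct (pigeonhole (filter (light nx pi Q) (seq 0 (length Q)))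
              (fun k => cell m nx (post_sqrt nx pi (nth k Q zcol))) (all_cells m nx))
    as [a [b [[Ha La]%filter_In [[Hb Lb]%filter_In [Hab Ec]]]]].
  - apply NoDup_filter, seq_NoDup.
  - intros k _. apply cell_in_all_cells; lia.
  - rewrite length_all_cells. lia.
  - apply in_seq in Ha, Hb. destruct (Nat.lt_total a b) as [Hlt|[Heq|Hlt]]; [|contradiction|].
    + exists a, b. repeat split; auto; lia.
    + exists b, a. repeat split; auto; lia.
Qed.

Lemma light_pair_merge_loss nx pi Q m i j : (2 <= nx)%nat -> (1 <= m)%nat -> is_input_dist nx pi ->
  proper_channel nx pi Q -> (i < j < length Q)%nat ->
  light nx pi Q i = true -> light nx pi Q j = true ->
  cell m nx (post_sqrt nx pi (nth i Q zcol)) = cell m nx (post_sqrt nx pi (nth j Q zcol)) ->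
  MI nx pi Q - MI nx pi (merge Q i j) <=
  4 / INR (length Q) * (INR nx * (INR nx - 1) * (1 / INR m) ^ 2).
Proof.
  intros Hn Hm Hpi [[Hnn _] Hpos] Hij Li Lj Ec.
  assert (Ii : In (nth i Q zcol) Q) by (apply nth_In; lia).
  assert (Ij : In (nth j Q zcol) Q) by (apply nth_In; lia).
  unfold light in Li, Lj.
  destruct (Rle_dec (out_prob nx pi (nth i Q zcol)) (2 / INR (length Q))) as [Pi|]; [|discriminate].
  destruct (Rle_dec (out_prob nx pi (nth j Q zcol)) (2 / INR (length Q))) as [Pj|]; [|discriminate].
  pose proof (Hpos _ Ii) as HPi. pose proof (Hpos _ Ij) as HPj.
  rewrite MI_merge_loss by exact Hij.
  eapply Rle_trans; [apply (mi_col_merge_le nx pi); auto; apply Hpi|].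
  pose proof (same_cell_dist nx pi _ _ m Hn Hm Hpi (Hnn _ Ii) HPi (Hnn _ Ij) HPj Ec) as Hdist.
  assert (0 <= fsum nx (fun x => (post_sqrt nx pi (nth i Q zcol) x - post_sqrt nx pi (nth j Q zcol) x) ^ 2))
    by (apply fsum_nonneg; intros; apply pow2_ge_0).
  replace (4 / INR (length Q)) with (2 / INR (length Q) + 2 / INR (length Q))
    by (field; apply not_0_INR; lia).
  apply Rmult_le_compat; lra.
Qed.

Lemma exists_cheap_merge nx pi Q : (2 <= nx)%nat -> is_input_dist nx pi ->
  proper_channel nx pi Q -> (2 * nx < length Q)%nat ->
  exists i j, (i < j < length Q)%nat /\
    MI nx pi Q - MI nx pi (merge Q i j) <=
    loss_const nx * (Rpower (INR (length Q - 1)) (- rate_exp nx) - Rpower (INR (length Q)) (- rate_exp nx)).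
Proof.
  intros Hn Hpi HQ HK.
  destruct (choose_resolution nx (length Q) Hn HK) as [m [Hm [Hle Hgt]]].
  destruct (light_pair_same_cell nx pi Q m Hn Hm Hpi HQ Hle) as [i [j [Hij [Li [Lj Ec]]]]].
  exists i, j. split; [exact Hij|].
  eapply Rle_trans; [apply (light_pair_merge_loss nx pi Q m i j); assumption|].
  now apply merge_rate.
Qed.

Lemma greedy_merge_loss nx pi L : (2 <= nx)%nat -> is_input_dist nx pi -> (2 * nx <= L)%nat ->
  forall Q R, greedy_merge nx pi L Q R -> proper_channel nx pi Q -> (L <= length Q)%nat ->
  MI nx pi Q - MI nx pi R <=
  loss_const nx * (Rpower (INR L) (- rate_exp nx) - Rpower (INR (length Q)) (- rate_exp nx)).
Proof.
  intros Hn Hpi HL Q R Hg. induction Hg as [Q HQ|Q Q' R HQ [i [j [Hij [Hj [-> Hmin]]]]] _ IH];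
    intros Hprop HLQ.
  - replace (length Q) with L by lia. lra.
  - destruct (exists_cheap_merge nx pi Q Hn Hpi Hprop ltac:(lia)) as [i' [j' [Hij' Hcheap]]].
    specialize (Hmin i' j' ltac:(lia) ltac:(lia)).
    specialize (IH (proper_channel_merge nx pi Q i j ltac:(lia) Hprop)).
    rewrite length_merge in IH by lia. specialize (IH ltac:(lia)). lra.
Qed.

Lemma loss_const_nonneg n : (2 <= n)%nat -> 0 <= loss_const n.
Proof.
  intros Hn. assert (2 <= INR n) by (apply (le_INR 2); exact Hn).
  pose proof (rate_exp_pos n Hn). pose proof (Rpower_pos (2 * INR n) (rate_exp n)).
  apply Rdiv_le_0_compat; [|assumption]. apply Rmult_le_pos; [nra|lra].
Qed.

Theorem theorem1 (nx : nat) (pi : nat -> R) (W : channel) (L : nat)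
  (hnx : (2 <= nx)%nat)
  (hpi : is_input_dist nx pi)
  (hW : is_channel nx W)
  (hout : forall c, In c W -> 0 < out_prob nx pi c)
  (hY : (2 * nx < length W)%nat)
  (hL : (2 * nx <= L)%nat) :
  (exists Q : channel, degraded nx Q W /\ (length Q <= L)%nat /\
     MI nx pi W - MI nx pi Q <= nu nx * Rpower (INR L) (- (2 / (INR nx - 1))))
  /\
  (forall Q : channel, greedy_merge nx pi L W Q ->
     MI nx pi W - MI nx pi Q <= nu nx * Rpower (INR L) (- (2 / (INR nx - 1)))).
Proof.
  assert (Greedy : forall Q, greedy_merge nx pi L W Q ->
            MI nx pi W - MI nx pi Q <= nu nx * Rpower (INR L) (- rate_exp nx)).
  { intros Q HQ. pose proof (loss_const_le_nu nx hnx). pose proof (loss_const_nonneg nx hnx).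
    pose proof (Rpower_pos (INR L) (- rate_exp nx)). pose proof (Rpower_pos (INR (length W)) (- rate_exp nx)).
    destruct (le_lt_dec (length W) L) as [Hle|Hlt].
    - inversion HQ; [subst; nra|lia].
    - pose proof (greedy_merge_loss nx pi L hnx hpi hL W Q HQ (conj hW hout) ltac:(lia)). nra. }
  split; [|exact Greedy].
  destruct (greedy_merge_exists nx pi L W ltac:(lia)) as [Q HQ].
  destruct (greedy_merge_output_map nx pi L W Q HQ) as [f Hf].
  exists Q. split; [|split].
  - exact (output_map_degraded nx f W Q Hf).
  - exact (greedy_merge_length nx pi L W Q HQ).
  - exact (Greedy Q HQ).
Qed.
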